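(* Let $3\leq m\leq n$, $\ell=m-1$, $p=(m-1)n$ and $Y\in\mathbb{R}^{n\times n\times\ell}$. If $\dim U(Y)=p$, then $Y\in\mathfrak{M}$.
   Context: For $Y=(Y_1;\ldots;Y_\ell)\in\mathbb{R}^{n\times n\times\ell}$ and $\mathbf{a}=(a_1,\ldots,a_\ell,a_m)^\top\in\mathbb{R}^m$, $M(\mathbf{a},Y)=\sum_{k=1}^\ell a_kY_k-a_mE_n$. Let $\psi(\mathbf{a},Y)\in\mathbb{R}^n$ have $j$-th entry $(-1)^{n+j}\det M(\mathbf{a},Y)_{n,j}$, where $M_{n,j}$ denotes the matrix obtained by deleting row $n$ and column $j$. Let $\check{\mathbf a}=(a_1,\ldots,a_\ell)^\top$ and $\check{\mathbf a}\otimes\psi(\mathbf a,Y)=(a_1\psi(\mathbf a,Y)^\top,\ldots,a_\ell\psi(\mathbf a,Y)^\top)^\top\in\mathbb{R}^p$. $U(Y)$ is the linear span of $\{\check{\mathbf a}\otimes\psi(\mathbf a,Y)\mid \mathbf a\in\mathbb{R}^m,\ \det M(\mathbf a,Y)=0\}$. $\mathfrak{M}$ is the set of $Y$ for which there exist a real $m\times p$ matrix $(x_{ij})$ and a real $n\times p$ matrix $A=(\mathbf{a}_1,\ldots,\mathbf{a}_p)$ with $(x_{1j}Y_1+\cdots+x_{\ell j}Y_\ell-x_{mj}E_n)\mathbf{a}_j=\mathbf{0}$ for all $j$ and $\begin{pmatrix}AD_1\\ \vdots\\ AD_\ell\end{pmatrix}$ nonsingular, where $D_k=\operatorname{diag}(x_{k1},\ldots,x_{kp})$.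 *)

From HB Require Import structures.
From mathcomp Require Import all_boot all_order all_algebra.
Set Implicit Arguments. Unset Strict Implicit. Unset Printing Implicit Defensive.
Import Order.TTheory GRing.Theory Num.Theory.
Local Open Scope ring_scope.

Section Defs.
Variable R : fieldType.

(* ell = number of slices; m = ell.+1; vectors a in R^m are functions 'I_ell.+1 -> R,
   with a_k = a (widen_ord _ k) for k < ell, and a_m = a ord_max. *)

Definition Mmat (ell n : nat) (Y : 'I_ell -> 'M[R]_n) (a : 'I_ell.+1 -> R) : 'M[R]_n :=
  \sum_(k < ell) a (widen_ord (leqnSn ell) k) *: Y k - a ord_max *: 1%:M.

(* psi(a,Y)_j = (-1)^(n+j) det M_{n,j} = cofactor of entry (n,j) *)
Definition psi_of (n : nat) : 'M[R]_n -> 'cV[R]_n :=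
  match n return 'M[R]_n -> 'cV[R]_n with
  | 0 => fun _ => 0
  | n'.+1 => fun M => \col_(j < n'.+1) cofactor M ord_max j
  end.

Definition psi (ell n : nat) (Y : 'I_ell -> 'M[R]_n) (a : 'I_ell.+1 -> R) : 'cV[R]_n :=
  psi_of (Mmat Y a).

(* checka (x) v = (a_1 v^T, ..., a_ell v^T)^T, as a row vector of R^(ell*n)
   (row-major mxvec = block ordering) *)
Definition kronv (ell n : nat) (a : 'I_ell.+1 -> R) (v : 'cV[R]_n) : 'rV[R]_(ell * n) :=
  mxvec (\matrix_(k < ell, i < n) (a (widen_ord (leqnSn ell) k) * v i 0)).

Definition Ugen (ell n : nat) (Y : 'I_ell -> 'M[R]_n) (v : 'rV[R]_(ell * n)) : Prop :=
  exists a : 'I_ell.+1 -> R, \det (Mmat Y a) = 0 /\ v = kronv a (psi Y a).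

Definition inU (ell n : nat) (Y : 'I_ell -> 'M[R]_n) (v : 'rV[R]_(ell * n)) : Prop :=
  exists (k : nat) (c : 'I_k -> R) (w : 'I_k -> 'rV[R]_(ell * n)),
    (forall i, Ugen Y (w i)) /\ v = \sum_(i < k) c i *: w i.

Definition dimU_eq (ell n : nat) (Y : 'I_ell -> 'M[R]_n) (d : nat) : Prop :=
  exists V : {vspace 'rV[R]_(ell * n)},
    (forall v, v \in V <-> inU Y v) /\ \dim V = d.

(* The stacked matrix (A D_1; ...; A D_ell), row index k*n+i <-> (k,i) *)
Definition stackAD (ell n : nat) (x : 'M[R]_(ell.+1, ell * n)) (A : 'M[R]_(n, ell * n))
  : 'M[R]_(ell * n) :=
  \matrix_(r < ell * n, j < ell * n)
     (mxvec (\matrix_(k < ell, i < n) (x (widen_ord (leqnSn ell) k) j * A i j))) 0 r.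

Definition inFrakM (ell n : nat) (Y : 'I_ell -> 'M[R]_n) : Prop :=
  exists (x : 'M[R]_(ell.+1, ell * n)) (A : 'M[R]_(n, ell * n)),
    (forall j : 'I_(ell * n),
        Mmat Y (fun k => x k j) *m col j A = 0) /\
    stackAD x A \in unitmx.

End Defs.

From HB Require Import structures.
From mathcomp Require Import all_boot all_order all_algebra.
Import Order.TTheory GRing.Theory Num.Theory.
Local Open Scope ring_scope.

(* Call a family a_1, ..., a_k of coefficient vectors singular
   when every M(a_i, Y) is singular, and let G(a) be the k x p matrix whose
   i-th row is the generator a_i (x) psi(a_i, Y) of U(Y).
   1. For a singular matrix M, the last column of adj M, i.e. psi, lies in
      the kernel of M (M adj M = det M = 0).
   2. A matrix is "generated" when its rows lie in the row space of G(a) for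
      some singular family a.  Generated matrices are closed under sums
      (concatenate the families), scalings and left multiplication, and
      contain the generators, hence every vector of U(Y).
   3. If dim U(Y) = p then U(Y) is the whole space, so every matrix, in
      particular the identity, is generated: the rows of some G(a) span R^p,
      and a p x p row submatrix G(a o f) of it is invertible.
   4. Taking x_j = a_(f j) and the j-th column of A equal to psi(a_(f j), Y),
      step 1 gives M(x_j, Y) a_j = 0, and the stacked matrix (A D_k)_k is the
      transpose of G(a o f), hence invertible: Y lies in frak M. *)

Lemma singular_mul_psi (R : fieldType) (n : nat) (M : 'M[R]_n) :
  \det M = 0 -> M *m psi_of M = 0.
Proof.
case: n M => [|n] M detM0; first by rewrite mulmx0.
apply/matrixP => i j; rewrite !mxE.
have adj_col : (M *m \adj M) i ord_max = 0 by rewrite mul_mx_adj detM0 !mxE mul0rn.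
rewrite -[RHS]adj_col !mxE; apply: eq_bigr => k _.
by rewrite /psi_of !mxE.
Qed.

Section Generated.
Variables (R : fieldType) (ell n : nat) (Y : 'I_ell -> 'M[R]_n).

Definition singular_family {k : nat} (a : 'I_k -> 'I_ell.+1 -> R) : Prop :=
  forall i, \det (Mmat Y (a i)) = 0.

Definition genmx {k : nat} (a : 'I_k -> 'I_ell.+1 -> R) : 'M[R]_(k, ell * n) :=
  \matrix_(i < k) kronv (a i) (psi Y (a i)).

Definition catfam {k1 k2 : nat} (a : 'I_k1 -> 'I_ell.+1 -> R)
  (b : 'I_k2 -> 'I_ell.+1 -> R) (i : 'I_(k1 + k2)) : 'I_ell.+1 -> R :=
  match split i with inl i1 => a i1 | inr i2 => b i2 end.

Lemma genmx_cat (k1 k2 : nat) (a : 'I_k1 -> 'I_ell.+1 -> R)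
    (b : 'I_k2 -> 'I_ell.+1 -> R) :
  genmx (catfam a b) = col_mx (genmx a) (genmx b).
Proof.
by apply/matrixP => i j; rewrite !mxE /catfam; case: split => i'; rewrite mxE.
Qed.

Lemma singular_cat (k1 k2 : nat) (a : 'I_k1 -> 'I_ell.+1 -> R)
    (b : 'I_k2 -> 'I_ell.+1 -> R) :
  singular_family a -> singular_family b -> singular_family (catfam a b).
Proof. by move=> sa sb i; rewrite /catfam; case: split. Qed.

Definition generated {r : nat} (B : 'M[R]_(r, ell * n)) : Prop :=
  exists k (a : 'I_k -> 'I_ell.+1 -> R), singular_family a /\ (B <= genmx a)%MS.

Lemma generated0 (r : nat) : generated (0 : 'M_(r, ell * n)).
Proof. by exists 0%N, (fun _ _ => 0); split => [[]//|]; exact: sub0mx. Qed.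

Lemma generatedD (r : nat) (B1 B2 : 'M_(r, ell * n)) :
  generated B1 -> generated B2 -> generated (B1 + B2).
Proof.
move=> [k1 [a [sa subB1]]] [k2 [b [sb subB2]]].
exists (k1 + k2)%N, (catfam a b); split; first exact: singular_cat.
by rewrite genmx_cat -addsmxE addmx_sub_adds.
Qed.

Lemma generatedZ (r : nat) (c : R) (B : 'M_(r, ell * n)) :
  generated B -> generated (c *: B).
Proof. by move=> [k [a [sa subB]]]; exists k, a; split; last exact: scalemx_sub. Qed.

Lemma generatedMl (r s : nat) (C : 'M_(s, r)) (B : 'M_(r, ell * n)) :
  generated B -> generated (C *m B).
Proof. by move=> [k [a [sa subB]]]; exists k, a; split; last exact: mulmx_sub. Qed.

Lemma generated_sum (r : nat) (I : finType) (B : I -> 'M_(r, ell * n)) :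
  (forall i, generated (B i)) -> generated (\sum_i B i).
Proof.
move=> genB; apply: (big_ind generated) => //.
  exact: generated0.
exact: generatedD.
Qed.

Lemma inU_generated (v : 'rV_(ell * n)) : inU Y v -> generated v.
Proof.
move=> [k [c [w [Ugen_w ->]]]]; apply: generated_sum => i; apply: generatedZ.
have [a [deta0 ->]] := Ugen_w i.
exists 1%N, (fun _ => a); split=> [_ //|].
have -> : kronv a (psi Y a) = row 0 (genmx (fun _ : 'I_1 => a)) by rewrite rowK.
exact: row_sub.
Qed.

Lemma inU_full : dimU_eq Y (ell * n) -> forall v, inU Y v.
Proof.
case=> V [memV dimV] v; apply/memV.
have -> : V = fullv.
  by apply/eqP; rewrite eqEdim subvf dimvf dimV dim_matrix mul1r leqnn.
exact: memvf.
Qed.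

(* If U(Y) is the whole space, every matrix is generated: write it as a
   combination of the matrix units delta_mx i j = delta_mx i 0 *m e_j. *)
Lemma generated_all : (forall v, inU Y v) ->
  forall r (B : 'M_(r, ell * n)), generated B.
Proof.
move=> U_full r B; rewrite [B]matrix_sum_delta.
apply: generated_sum => i; apply: generated_sum => j; apply: generatedZ.
rewrite -(mul_delta_mx (0 : 'I_1)); apply: generatedMl.
exact: inU_generated.
Qed.

Lemma Mmat_ext (a b : 'I_ell.+1 -> R) : a =1 b -> Mmat Y a = Mmat Y b.
Proof.
by move=> eq_ab; rewrite /Mmat eq_ab; congr (_ - _); apply: eq_bigr => k _; rewrite eq_ab.
Qed.

(* A singular family whose generators span R^p yields a point of frak M:
   a p x p invertible row submatrix of G(a) is the transpose of (A D_k)_k. *)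
Lemma frakM_of_full_family {k : nat} {a : 'I_k -> 'I_ell.+1 -> R} :
  singular_family a -> row_full (genmx a) -> inFrakM Y.
Proof.
move=> sing_a full_a; set f := fullrankfun full_a.
exists (\matrix_(kk, j) a (f j) kk), (\matrix_(i, j) psi Y (a (f j)) i 0).
split=> [j|].
  have -> : Mmat Y (fun kk => (\matrix_(kk, j) a (f j) kk) kk j) = Mmat Y (a (f j)).
    by apply: Mmat_ext => kk; rewrite mxE.
  have -> : col j (\matrix_(i, j) psi Y (a (f j)) i 0) = psi Y (a (f j)).
    by apply/matrixP => i l; rewrite !mxE ord1.
  exact/singular_mul_psi/sing_a.
have -> : stackAD (\matrix_(kk, j) a (f j) kk) (\matrix_(i, j) psi Y (a (f j)) i 0)
    = (rowsub f (genmx a))^T.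
  apply/matrixP => r j; rewrite !mxE /kronv; congr (mxvec _ 0 r).
  by apply/matrixP => kk i; rewrite !mxE.
by rewrite unitmx_tr fullrowsub_unit.
Qed.

Theorem frakM_of_full_U : dimU_eq Y (ell * n) -> inFrakM Y.
Proof.
move=> dimU.
have [k [a [sing_a sub1]]] := generated_all (inU_full dimU) _ (1%:M : 'M_(ell * n)).
by apply: (frakM_of_full_family sing_a); rewrite -sub1mx.
Qed.

End Generated.

Theorem mainTheorem14 (R : realFieldType) (m n : nat)
  (Hm : (3 <= m)%N) (Hmn : (m <= n)%N) (Y : 'I_(m.-1) -> 'M[R]_n) :
  dimU_eq Y (m.-1 * n)%N -> inFrakM Y.
Proof. exact: frakM_of_full_U. Qed.
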